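(* Let $\Sigma\supseteq\Sigma_m$ be a signature and $E\supseteq\mathrm{Md}$ a set of $\Sigma$-equations such that $(\Sigma,E)$ has the propagation property for pseudo units and the propagation property for pseudo zeros. Then for all closed $\Sigma$-terms $t,r,s$: (i) if $E\cup\{t=0\}\vdash_{\mathrm{IR}} r=s$ then $E\vdash 0_t\cdot r=0_t\cdot s$; (ii) if $E\cup\{1_t=1\}\vdash_{\mathrm{IR}} r=s$ then $E\vdash 1_t\cdot r=1_t\cdot s$.
   Context: $\Sigma_m=(0,1,+,\cdot,-,{}^{-1})$; $\mathrm{Md}$ is the set of equations $(x+y)+z=x+(y+z)$, $x+y=y+x$, $x+0=x$, $x+(-x)=0$, $(x\cdot y)\cdot z=x\cdot(y\cdot z)$, $x\cdot y=y\cdot x$, $1\cdot x=x$, $x\cdot(y+z)=x\cdot y+x\cdot z$, $(x^{-1})^{-1}=x$, $x\cdot(x\cdot x^{-1})=x$. $1_t$ abbreviates $t\cdot t^{-1}$, $0_t$ abbreviates $1+(-1_t)$. $\vdash$ denotes derivability in equational logic. $(\Sigma,E)$ has the propagation property for pseudo units if for all $\Sigma$-terms $t,r$ and every context $C[\,]$, $E\vdash 1_t\cdot C[r]=1_t\cdot C[1_t\cdot r]$; it has the propagation property for pseudo zeros if for all $\Sigma$-terms $t,r$ and every context $C[\,]$, $E\vdash 0_t\cdot C[r]=0_t\cdot C[0_t\cdot r]$. The inverse rule IR is: from $F\cup\{h=0\}\vdash r=s$ and $F\cup\{1_h=1\}\vdash r=s$ infer $F\vdash r=s$, with $h$ ranging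 over closed $\Sigma$-terms. $F\vdash_{\mathrm{IR}} r=s$ means $r=s$ is derivable from $F$ in equational logic extended with finitely many applications of IR. *)

From Stdlib Require Import List.
Import ListNotations.
Set Implicit Arguments.

Inductive msym : Type := mZero | mOne | mAdd | mMul | mNeg | mInv.

Definition marity (f : msym) : nat :=
  match f with
  | mZero | mOne => 0
  | mAdd | mMul => 2
  | mNeg | mInv => 1
  end.

(** A signature Sigma containing Sigma_m: the symbols of Sigma_m together with
    an arbitrary type of further symbols with arities. *)
Record signature : Type := {
  xsym : Type;
  xar : xsym -> nat
}.

Definition sym (Sg : signature) : Type := (msym + xsym Sg)%type.

Definition ar {Sg : signature} (f : sym Sg) : nat :=
  match f with inl g => marity g | inr g => xar Sg g end.

(** Terms over variables indexed by nat (raw syntax; arity checked by [wf]). *)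
Inductive term (Sg : signature) : Type :=
| Var : nat -> term Sg
| Fun : sym Sg -> list (term Sg) -> term Sg.
Arguments Var {Sg} _.
Arguments Fun {Sg} _ _.

Inductive wf {Sg : signature} : term Sg -> Prop :=
| wf_var n : wf (Var n)
| wf_fun f args : length args = ar f -> Forall wf args -> wf (Fun f args).

Inductive closed {Sg : signature} : term Sg -> Prop :=
| closed_fun f args : Forall closed args -> closed (Fun f args).

Fixpoint subst {Sg : signature} (sg : nat -> term Sg) (t : term Sg) : term Sg :=
  match t with
  | Var n => sg n
  | Fun f args => Fun f (map (subst sg) args)
  end.

Inductive ctx (Sg : signature) : Type :=
| Hole : ctx Sg
| CFun : sym Sg -> list (term Sg) -> ctx Sg -> list (term Sg) -> ctx Sg.
Arguments Hole {Sg}.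
Arguments CFun {Sg} _ _ _ _.

Inductive wf_ctx {Sg : signature} : ctx Sg -> Prop :=
| wf_hole : wf_ctx Hole
| wf_cfun f l c r :
    length l + Datatypes.S (length r) = ar f -> Forall wf l -> wf_ctx c -> Forall wf r ->
    wf_ctx (CFun f l c r).

Fixpoint plug {Sg : signature} (c : ctx Sg) (t : term Sg) : term Sg :=
  match c with
  | Hole => t
  | CFun f l c' r => Fun f (l ++ plug c' t :: r)
  end.

Section Ops.
Context {Sg : signature}.
Definition tzero : term Sg := Fun (inl mZero) [].
Definition tone : term Sg := Fun (inl mOne) [].
Definition tadd (a b : term Sg) : term Sg := Fun (inl mAdd) [a; b].
Definition tmul (a b : term Sg) : term Sg := Fun (inl mMul) [a; b].
Definition tneg (a : term Sg) : term Sg := Fun (inl mNeg) [a].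
Definition tinv (a : term Sg) : term Sg := Fun (inl mInv) [a].
Definition one_t (t : term Sg) : term Sg := tmul t (tinv t).
Definition zero_t (t : term Sg) : term Sg := tadd tone (tneg (one_t t)).
End Ops.

Definition eqset (Sg : signature) : Type := term Sg -> term Sg -> Prop.

Definition add_eq {Sg : signature} (F : eqset Sg) (a b : term Sg) : eqset Sg :=
  fun x y => F x y \/ (x = a /\ y = b).

Definition Md {Sg : signature} : eqset Sg :=
  let x : term Sg := Var 0 in let y : term Sg := Var 1 in let z : term Sg := Var 2 in
  fun a b =>
    (a = tadd (tadd x y) z /\ b = tadd x (tadd y z)) \/
    (a = tadd x y /\ b = tadd y x) \/
    (a = tadd x tzero /\ b = x) \/
    (a = tadd x (tneg x) /\ b = tzero) \/
    (a = tmul (tmul x y) z /\ b = tmul x (tmul y z)) \/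
    (a = tmul x y /\ b = tmul y x) \/
    (a = tmul tone x /\ b = x) \/
    (a = tmul x (tadd y z) /\ b = tadd (tmul x y) (tmul x z)) \/
    (a = tinv (tinv x) /\ b = x) \/
    (a = tmul x (tmul x (tinv x)) /\ b = x).

(** Derivability. [deriv false F r s] is F |- r = s in equational logic;
    [deriv true F r s] is F |-_IR r = s (equational logic + the inverse rule IR,
    applicable finitely often, i.e. any finite derivation tree). *)
Inductive deriv {Sg : signature} (ir : bool) : eqset Sg -> term Sg -> term Sg -> Prop :=
| d_ax F a b : F a b -> deriv ir F a b
| d_refl F a : wf a -> deriv ir F a a
| d_sym F a b : deriv ir F a b -> deriv ir F b a
| d_trans F a b c : deriv ir F a b -> deriv ir F b c -> deriv ir F a c
| d_ctx F (C : ctx Sg) a b : wf_ctx C -> deriv ir F a b -> deriv ir F (plug C a) (plug C b)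
| d_subst F (sg : nat -> term Sg) a b :
    (forall n, wf (sg n)) -> deriv ir F a b -> deriv ir F (subst sg a) (subst sg b)
| d_IR F (h : term Sg) r s :
    ir = true -> wf h -> closed h ->
    deriv ir (add_eq F h tzero) r s -> deriv ir (add_eq F (one_t h) tone) r s ->
    deriv ir F r s.

Definition prop_pseudo_units {Sg : signature} (E : eqset Sg) : Prop :=
  forall (t r : term Sg) (C : ctx Sg), wf t -> wf r -> wf_ctx C ->
    deriv false E (tmul (one_t t) (plug C r)) (tmul (one_t t) (plug C (tmul (one_t t) r))).

Definition prop_pseudo_zeros {Sg : signature} (E : eqset Sg) : Prop :=
  forall (t r : term Sg) (C : ctx Sg), wf t -> wf r -> wf_ctx C ->
    deriv false E (tmul (zero_t t) (plug C r)) (tmul (zero_t t) (plug C (tmul (zero_t t) r))).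

From Stdlib Require Import List.
Import ListNotations.

(* Call a closed term p a guard for a set of equations F (over E)
   if E |- p.C[r] = p.C[p.r] for all contexts (p propagates) and E |- p.x = p.y
   for every equation x = y of F.  The key fact [guarded_transfer] says: if
   F |-_IR a = b and p guards F, then E |- p.a = p.b.  It is proved by
   induction on the derivation: equational steps commute with the multiplier
   p (contexts via propagation, substitutions because p is closed), and an
   application of IR on h is simulated by splitting p = p.0_h + p.1_h, since
   p.0_h guards F + {h = 0} and p.1_h guards F + {1_h = 1}. *)

Fixpoint term_ind_Forall {Sg : signature} (P : term Sg -> Prop)
  (Hvar : forall n, P (Var n))
  (Hfun : forall f args, Forall P args -> P (Fun f args))
  (t : term Sg) : P t :=
  match t with
  | Var n => Hvar n
  | Fun f args =>
      Hfun f args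
        ((fix go l := match l return Forall P l with
          | [] => Forall_nil _
          | x :: l' => Forall_cons _ (term_ind_Forall P Hvar Hfun x) (go l')
          end) args)
  end.

Lemma wf_subst {Sg : signature} (sg : nat -> term Sg) :
  (forall n, wf (sg n)) -> forall t, wf t -> wf (subst sg t).
Proof.
  intros Hsg t. induction t as [n | f args IH] using term_ind_Forall; intros Ht; simpl; auto.
  inversion Ht as [| ? ? Hlen Hargs]; subst.
  constructor; [now rewrite length_map |].
  clear Hlen Ht. induction args as [| a l IHl]; simpl; constructor;
    inversion IH; inversion Hargs; subst; auto.
Qed.

Lemma closed_subst {Sg : signature} (sg : nat -> term Sg) :
  forall t, closed t -> subst sg t = t.
Proof.
  intros t. induction t as [n | f args IH] using term_ind_Forall; intros Ht; simpl.
  - inversion Ht.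
  - inversion Ht as [? ? Hargs]; subst. f_equal. clear Ht.
    induction args as [| a l IHl]; simpl; auto.
    inversion IH; inversion Hargs; subst. f_equal; auto.
Qed.

Lemma wf_plug {Sg : signature} (C : ctx Sg) a : wf_ctx C -> wf a -> wf (plug C a).
Proof.
  intros HC Ha. induction HC; simpl; auto.
  constructor; [rewrite length_app; simpl; auto |].
  apply Forall_app; auto.
Qed.

Section WellFormed.
Context {Sg : signature}.

Lemma wf_add (a b : term Sg) : wf a -> wf b -> wf (tadd a b).
Proof. intros; constructor; auto. Qed.
Lemma wf_mul (a b : term Sg) : wf a -> wf b -> wf (tmul a b).
Proof. intros; constructor; auto. Qed.
Lemma wf_neg (a : term Sg) : wf a -> wf (tneg a).
Proof. intros; constructor; auto. Qed.
Lemma wf_inv (a : term Sg) : wf a -> wf (tinv a).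
Proof. intros; constructor; auto. Qed.
Lemma wf_zero : wf (@tzero Sg).
Proof. constructor; auto. Qed.
Lemma wf_one : wf (@tone Sg).
Proof. constructor; auto. Qed.
Lemma wf_one_t (a : term Sg) : wf a -> wf (one_t a).
Proof. intros; apply wf_mul, wf_inv; auto. Qed.
Lemma wf_zero_t (a : term Sg) : wf a -> wf (zero_t a).
Proof. intros; apply wf_add, wf_neg, wf_one_t; auto using wf_one. Qed.

Lemma closed_mul (a b : term Sg) : closed a -> closed b -> closed (tmul a b).
Proof. intros; repeat constructor; auto. Qed.
Lemma closed_zero_t (a : term Sg) : closed a -> closed (zero_t a).
Proof. intros; repeat constructor; auto. Qed.
Lemma closed_one_t (a : term Sg) : closed a -> closed (one_t a).
Proof. intros; repeat constructor; auto. Qed.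

Definition wf_eqs (F : eqset Sg) : Prop := forall x y, F x y -> wf x /\ wf y.

Lemma wf_eqs_add_eq (F : eqset Sg) a b :
  wf_eqs F -> wf a -> wf b -> wf_eqs (add_eq F a b).
Proof. intros HF Ha Hb x y [Hxy | [-> ->]]; auto. Qed.

Lemma deriv_wf {ir} {F : eqset Sg} {a b} : deriv ir F a b -> wf_eqs F -> wf a /\ wf b.
Proof.
  intros H. induction H; intros HF; auto.
  - destruct IHderiv; auto.
  - destruct IHderiv1, IHderiv2; auto.
  - destruct IHderiv; auto using wf_plug.
  - destruct IHderiv; auto using wf_subst.
  - apply IHderiv1, wf_eqs_add_eq; auto using wf_zero.
Qed.

End WellFormed.
#[export] Hint Resolve wf_add wf_mul wf_neg wf_inv wf_zero wf_one wf_one_t wf_zero_t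
  closed_mul closed_zero_t closed_one_t : core.

Ltac via m := apply d_trans with m.

Section RingLaws.
Context {Sg : signature} (E : eqset Sg) (HMd : forall a b, Md a b -> E a b).
Local Notation D := (deriv false E).

Definition inst3 (x y z : term Sg) : nat -> term Sg :=
  fun n => match n with 0 => x | 1 => y | _ => z end.

Lemma Md_instance a b x y z : Md a b -> wf x -> wf y -> wf z ->
  D (subst (inst3 x y z) a) (subst (inst3 x y z) b).
Proof.
  intros Hab Hx Hy Hz. apply d_subst; [intros [| [| n]]; simpl; auto |].
  apply d_ax, HMd, Hab.
Qed.

Ltac Md_axiom :=
  unfold Md; repeat first [left; split; reflexivity | right]; split; reflexivity.

Local Notation x := (Var 0 : term Sg).
Local Notation y := (Var 1 : term Sg).
Local Notation z := (Var 2 : term Sg).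

Lemma addA a b c : wf a -> wf b -> wf c -> D (tadd (tadd a b) c) (tadd a (tadd b c)).
Proof. intros Ha Hb Hc. exact (Md_instance (tadd (tadd x y) z) _ a b c ltac:(Md_axiom) Ha Hb Hc). Qed.
Lemma addC a b : wf a -> wf b -> D (tadd a b) (tadd b a).
Proof. intros Ha Hb. exact (Md_instance (tadd x y) _ a b a ltac:(Md_axiom) Ha Hb Ha). Qed.
Lemma add0 a : wf a -> D (tadd a tzero) a.
Proof. intros Ha. exact (Md_instance (tadd x tzero) _ a a a ltac:(Md_axiom) Ha Ha Ha). Qed.
Lemma addN a : wf a -> D (tadd a (tneg a)) tzero.
Proof. intros Ha. exact (Md_instance (tadd x (tneg x)) _ a a a ltac:(Md_axiom) Ha Ha Ha). Qed.
Lemma mulA a b c : wf a -> wf b -> wf c -> D (tmul (tmul a b) c) (tmul a (tmul b c)).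
Proof. intros Ha Hb Hc. exact (Md_instance (tmul (tmul x y) z) _ a b c ltac:(Md_axiom) Ha Hb Hc). Qed.
Lemma mulC a b : wf a -> wf b -> D (tmul a b) (tmul b a).
Proof. intros Ha Hb. exact (Md_instance (tmul x y) _ a b a ltac:(Md_axiom) Ha Hb Ha). Qed.
Lemma mul1 a : wf a -> D (tmul tone a) a.
Proof. intros Ha. exact (Md_instance (tmul tone x) _ a a a ltac:(Md_axiom) Ha Ha Ha). Qed.
Lemma mulDr a b c : wf a -> wf b -> wf c -> D (tmul a (tadd b c)) (tadd (tmul a b) (tmul a c)).
Proof. intros Ha Hb Hc. exact (Md_instance (tmul x (tadd y z)) _ a b c ltac:(Md_axiom) Ha Hb Hc). Qed.
Lemma mulI a : wf a -> D (tmul a (one_t a)) a.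
Proof. intros Ha. exact (Md_instance (tmul x (one_t x)) _ a a a ltac:(Md_axiom) Ha Ha Ha). Qed.

Lemma cong_addl a b c : wf c -> D a b -> D (tadd a c) (tadd b c).
Proof. intros Hc H. exact (@d_ctx _ _ _ (CFun (inl mAdd) [] Hole [c]) a b ltac:(repeat constructor; auto) H). Qed.
Lemma cong_addr a b c : wf c -> D a b -> D (tadd c a) (tadd c b).
Proof. intros Hc H. exact (@d_ctx _ _ _ (CFun (inl mAdd) [c] Hole []) a b ltac:(repeat constructor; auto) H). Qed.
Lemma cong_mull a b c : wf c -> D a b -> D (tmul a c) (tmul b c).
Proof. intros Hc H. exact (@d_ctx _ _ _ (CFun (inl mMul) [] Hole [c]) a b ltac:(repeat constructor; auto) H). Qed.
Lemma cong_mulr a b c : wf c -> D a b -> D (tmul c a) (tmul c b).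
Proof. intros Hc H. exact (@d_ctx _ _ _ (CFun (inl mMul) [c] Hole []) a b ltac:(repeat constructor; auto) H). Qed.
Lemma cong_neg a b : D a b -> D (tneg a) (tneg b).
Proof. intros H. exact (@d_ctx _ _ _ (CFun (inl mNeg) [] Hole []) a b ltac:(repeat constructor; auto) H). Qed.

Lemma mulr1 a : wf a -> D (tmul a tone) a.
Proof. intros. via (tmul tone a); [apply mulC | apply mul1]; auto. Qed.

Lemma add0l a : wf a -> D (tadd tzero a) a.
Proof. intros. via (tadd a tzero); [apply addC | apply add0]; auto. Qed.

(* a.0 = 0, from a.0 = a.0 + a.0 - a.0 = a.(0 + 0) - a.0. *)
Lemma mulr0 a : wf a -> D (tmul a tzero) tzero.
Proof.
  intros Ha. set (u := tmul a tzero). assert (Hu : wf u) by (unfold u; auto).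
  via (tadd u (tadd u (tneg u))).
  { via (tadd u tzero); [apply d_sym, add0 | apply cong_addr, d_sym, addN]; auto. }
  via (tadd (tadd u u) (tneg u)); [apply d_sym, addA; auto |].
  via (tadd u (tneg u)); [| apply addN; auto].
  apply cong_addl; auto.
  via (tmul a (tadd tzero tzero)); [apply d_sym, mulDr | apply cong_mulr, add0]; auto.
Qed.

(* a.(-b) = -(a.b), from a.(-b) = a.(-b) + a.b - a.b = a.(-b + b) - a.b. *)
Lemma mulNr a b : wf a -> wf b -> D (tmul a (tneg b)) (tneg (tmul a b)).
Proof.
  intros Ha Hb. set (u := tmul a (tneg b)). set (v := tmul a b).
  assert (Hu : wf u) by (unfold u; auto). assert (Hv : wf v) by (unfold v; auto).
  via (tadd u (tadd v (tneg v))).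
  { via (tadd u tzero); [apply d_sym, add0 | apply cong_addr, d_sym, addN]; auto. }
  via (tadd (tadd u v) (tneg v)); [apply d_sym, addA; auto |].
  via (tadd tzero (tneg v)); [| apply add0l; auto].
  apply cong_addl; auto.
  via (tmul a (tadd (tneg b) b)); [apply d_sym, mulDr; auto |].
  via (tmul a tzero); [| apply mulr0; auto].
  apply cong_mulr; auto. via (tadd b (tneg b)); [apply addC | apply addN]; auto.
Qed.

Lemma mulCA a b c : wf a -> wf b -> wf c -> D (tmul a (tmul b c)) (tmul b (tmul a c)).
Proof.
  intros. via (tmul (tmul a b) c); [apply d_sym, mulA; auto |].
  via (tmul (tmul b a) c); [apply cong_mull, mulC | apply mulA]; auto.
Qed.

(* The pseudo zero of h annihilates h: 0_h.h = h - h.1_h = h - h = 0. *)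
Lemma pseudo_zero_annihilates h : wf h -> D (tmul (zero_t h) h) tzero.
Proof.
  intros Hh. unfold zero_t.
  via (tmul h (tadd tone (tneg (one_t h)))); [apply mulC; auto |].
  via (tadd (tmul h tone) (tmul h (tneg (one_t h)))); [apply mulDr; auto |].
  via (tadd h (tneg h)); [| apply addN; auto].
  via (tadd h (tmul h (tneg (one_t h)))); [apply cong_addl, mulr1; auto |].
  apply cong_addr; auto.
  via (tneg (tmul h (one_t h))); [apply mulNr | apply cong_neg, mulI]; auto.
Qed.

(* The pseudo unit of h is idempotent: 1_h.1_h = h^-1.(h.h.h^-1) = h^-1.h = 1_h. *)
Lemma pseudo_unit_idempotent h : wf h -> D (tmul (one_t h) (one_t h)) (one_t h).
Proof.
  intros Hh. unfold one_t at 1.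
  via (tmul (tmul (tinv h) h) (one_t h)); [apply cong_mull, mulC; auto |].
  via (tmul (tinv h) (tmul h (one_t h))); [apply mulA; auto |].
  via (tmul (tinv h) h); [apply cong_mulr, mulI | apply mulC]; auto.
Qed.

Lemma zero_t_validates h : wf h -> D (tmul (zero_t h) h) (tmul (zero_t h) tzero).
Proof. intros. via (@tzero Sg); [apply pseudo_zero_annihilates | apply d_sym, mulr0]; auto. Qed.

Lemma one_t_validates h : wf h -> D (tmul (one_t h) (one_t h)) (tmul (one_t h) tone).
Proof. intros. via (one_t h); [apply pseudo_unit_idempotent | apply d_sym, mulr1]; auto. Qed.

Lemma pseudo_zero_add_unit h : wf h -> D (tadd (zero_t h) (one_t h)) tone.
Proof.
  intros Hh. unfold zero_t.
  via (tadd tone (tadd (tneg (one_t h)) (one_t h))); [apply addA; auto |].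
  via (tadd (@tone Sg) tzero); [| apply add0; auto].
  apply cong_addr; auto. via (tadd (one_t h) (tneg (one_t h))); [apply addC | apply addN]; auto.
Qed.

Lemma mul_split p u v X : wf p -> wf u -> wf v -> wf X -> D (tadd u v) tone ->
  D (tmul p X) (tadd (tmul (tmul p u) X) (tmul (tmul p v) X)).
Proof.
  intros Hp Hu Hv HX Huv. apply d_sym.
  via (tadd (tmul p (tmul u X)) (tmul p (tmul v X))).
  { via (tadd (tmul p (tmul u X)) (tmul (tmul p v) X));
      [apply cong_addl, mulA | apply cong_addr, mulA]; auto. }
  via (tmul p (tadd (tmul u X) (tmul v X))); [apply d_sym, mulDr; auto |].
  apply cong_mulr; auto.
  via (tadd (tmul X u) (tmul X v)).
  { via (tadd (tmul X u) (tmul v X)); [apply cong_addl, mulC | apply cong_addr, mulC]; auto. }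
  via (tmul X (tadd u v)); [apply d_sym, mulDr; auto |].
  via (tmul X tone); [apply cong_mulr, Huv | apply mulr1]; auto.
Qed.

Lemma mul_guard_l p q a b : wf p -> wf q -> wf a -> wf b ->
  D (tmul q a) (tmul q b) -> D (tmul (tmul p q) a) (tmul (tmul p q) b).
Proof.
  intros Hp Hq Ha Hb H.
  via (tmul p (tmul q a)); [apply mulA; auto |].
  via (tmul p (tmul q b)); [apply cong_mulr, H | apply d_sym, mulA]; auto.
Qed.

Lemma mul_guard_r p q a b : wf p -> wf q -> wf a -> wf b ->
  D (tmul p a) (tmul p b) -> D (tmul (tmul p q) a) (tmul (tmul p q) b).
Proof.
  intros Hp Hq Ha Hb H.
  via (tmul (tmul q p) a); [apply cong_mull, mulC; auto |].
  via (tmul (tmul q p) b); [apply mul_guard_l, H | apply cong_mull, mulC]; auto.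
Qed.

End RingLaws.

Section Guards.
Context {Sg : signature} (E : eqset Sg) (HMd : forall a b, Md a b -> E a b).
Local Notation D := (deriv false E).

Definition propagates (p : term Sg) : Prop := forall C r, wf_ctx C -> wf r ->
  D (tmul p (plug C r)) (tmul p (plug C (tmul p r))).

Definition validates (p : term Sg) (F : eqset Sg) : Prop :=
  forall x y, F x y -> D (tmul p x) (tmul p y).

Lemma propagates_zero_t t : prop_pseudo_zeros E -> wf t -> propagates (zero_t t).
Proof. intros PZ Ht C r HC Hr. apply PZ; auto. Qed.

Lemma propagates_one_t t : prop_pseudo_units E -> wf t -> propagates (one_t t).
Proof. intros PU Ht C r HC Hr. apply PU; auto. Qed.

(* Propagating multipliers are closed under products:
   pq.C[r] = q.p.C[q.r] = q.p.C[p.q.r] = p.q.C[pq.r], using both propagations. *)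
Lemma propagates_mul p q : wf p -> wf q -> propagates p -> propagates q ->
  propagates (tmul p q).
Proof.
  intros Hp Hq Pp Pq C r HC Hr.
  assert (Wplug : forall u, wf u -> wf (plug C u)) by (intros; apply wf_plug; auto).
  via (tmul p (tmul q (plug C r))); [apply mulA; auto |].
  via (tmul p (tmul q (plug C (tmul q r)))); [apply cong_mulr, Pq; auto |].
  via (tmul q (tmul p (plug C (tmul q r)))); [apply mulCA; auto |].
  via (tmul q (tmul p (plug C (tmul p (tmul q r))))); [apply cong_mulr, Pp; auto |].
  via (tmul q (tmul p (plug C (tmul (tmul p q) r)))).
  { apply cong_mulr, cong_mulr, d_ctx, d_sym, mulA; auto. }
  via (tmul p (tmul q (plug C (tmul (tmul p q) r)))); [apply mulCA; auto |].
  apply d_sym, mulA; auto.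
Qed.

Lemma validates_E p : wf p -> wf_eqs E -> validates p E.
Proof. intros Hp HE x y Hxy. destruct (HE x y Hxy). apply cong_mulr, d_ax; auto. Qed.

Lemma validates_add_eq p F a b : validates p F -> D (tmul p a) (tmul p b) ->
  validates p (add_eq F a b).
Proof. intros HF Hab x y [Hxy | [-> ->]]; auto. Qed.

Lemma validates_mul p q F : wf p -> wf q -> wf_eqs F -> validates p F ->
  validates (tmul p q) F.
Proof. intros Hp Hq HF Vp x y Hxy. destruct (HF x y Hxy). apply mul_guard_r; auto. Qed.

Lemma guarded_transfer (PU : prop_pseudo_units E) (PZ : prop_pseudo_zeros E)
  {F a b} : deriv true F a b ->
  forall p, wf p -> closed p -> propagates p -> wf_eqs F -> validates p F ->
  D (tmul p a) (tmul p b).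
Proof.
  intros H. induction H as [F a b Hab | F a Ha | F a b _ IH | F a b c _ IH1 _ IH2
    | F C a b HC Hab IH | F sg a b Hsg _ IH | F h r s _ Hh Ch Hzero IHzero Hone IHone];
    intros p Hp Cp Pp WF VF.
  - auto.
  - apply d_refl; auto.
  - apply d_sym; auto.
  - via (tmul p b); auto.
  - (* contexts: move p inside with propagation, then back out *)
    destruct (deriv_wf Hab WF) as [Wa Wb].
    via (tmul p (plug C (tmul p a))); [apply Pp; auto |].
    via (tmul p (plug C (tmul p b))); [apply cong_mulr, d_ctx; auto using wf_plug |].
    apply d_sym, Pp; auto.
  - (* p is closed, so multiplying by p commutes with substitution *)
    assert (Hcomm : forall u, subst sg (tmul p u) = tmul p (subst sg u)).
    { intros u. unfold tmul. simpl. rewrite closed_subst; auto. }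
    rewrite <- !Hcomm. apply d_subst; auto.
  - (* IR on h: p.0_h guards F + {h = 0}, p.1_h guards F + {1_h = 1},
       and p = p.0_h + p.1_h recombines both conclusions *)
    assert (WFzero : wf_eqs (add_eq F h tzero)) by (apply wf_eqs_add_eq; auto).
    destruct (deriv_wf Hzero WFzero) as [Wr Ws].
    assert (Szero : D (tmul (tmul p (zero_t h)) r) (tmul (tmul p (zero_t h)) s)).
    { apply IHzero; auto.
      - apply propagates_mul; auto using propagates_zero_t.
      - apply validates_add_eq; [apply validates_mul; auto |].
        apply mul_guard_l; auto using zero_t_validates. }
    assert (Sone : D (tmul (tmul p (one_t h)) r) (tmul (tmul p (one_t h)) s)).
    { apply IHone; auto.
      - apply propagates_mul; auto using propagates_one_t.
      - apply wf_eqs_add_eq; auto.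
      - apply validates_add_eq; [apply validates_mul; auto |].
        apply mul_guard_l; auto using one_t_validates. }
    via (tadd (tmul (tmul p (zero_t h)) r) (tmul (tmul p (one_t h)) r));
      [apply mul_split, pseudo_zero_add_unit; auto |].
    via (tadd (tmul (tmul p (zero_t h)) s) (tmul (tmul p (one_t h)) s)).
    { via (tadd (tmul (tmul p (zero_t h)) s) (tmul (tmul p (one_t h)) r));
        [apply cong_addl | apply cong_addr]; auto. }
    apply d_sym, mul_split, pseudo_zero_add_unit; auto.
Qed.

End Guards.

Theorem proposition1 (Sg : signature) (E : eqset Sg) :
  (forall a b, Md a b -> E a b) ->
  (forall a b, E a b -> wf a /\ wf b) ->
  prop_pseudo_units E -> prop_pseudo_zeros E ->
  forall t r s : term Sg,
    wf t -> closed t -> wf r -> closed r -> wf s -> closed s ->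
    (deriv true (add_eq E t tzero) r s ->
       deriv false E (tmul (zero_t t) r) (tmul (zero_t t) s)) /\
    (deriv true (add_eq E (one_t t) tone) r s ->
       deriv false E (tmul (one_t t) r) (tmul (one_t t) s)).
Proof.
  intros HMd WE PU PZ t r s Wt Ct Wr _ Ws _. split; intros Hderiv.
  - (* 0_t guards E + {t = 0}, because 0_t.t = 0 = 0_t.0 *)
    apply (guarded_transfer E HMd PU PZ Hderiv); auto using propagates_zero_t, wf_eqs_add_eq.
    apply validates_add_eq; auto using validates_E, zero_t_validates.
  - (* 1_t guards E + {1_t = 1}, because 1_t.1_t = 1_t = 1_t.1 *)
    apply (guarded_transfer E HMd PU PZ Hderiv); auto using propagates_one_t, wf_eqs_add_eq.
    apply validates_add_eq; auto using validates_E, one_t_validates.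
Qed.
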